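(* For $0\le v\le 1$ and $a,b>0$, $$H(a,b)\le G\left(H_v(a,b),H_{1-v}(a,b)\right)\le G(a,b)$$ and $$H(a,b)\le H\left(G_v(a,b),G_{1-v}(a,b)\right)\le G(a,b).$$
   Context: For $x,y>0$ and $0\le v\le 1$: $G(x,y):=\sqrt{xy}$, $G_v(x,y):=x^{1-v}y^v$, the weighted harmonic mean $H_v(x,y):=\left\{(1-v)x^{-1}+vy^{-1}\right\}^{-1}$, and $H(x,y):=H_{1/2}(x,y)=\frac{2xy}{x+y}$. *)

From Stdlib Require Import Reals.
Open Scope R_scope.

Definition Gm (x y : R) : R := sqrt (x * y).
Definition Gw (v x y : R) : R := Rpower x (1 - v) * Rpower y v.
Definition Hw (v x y : R) : R := / ((1 - v) * / x + v * / y).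
Definition Hm (x y : R) : R := 2 * x * y / (x + y).

(* Both inner means are of the form a b / m with G(a,b) <= m <= A(a,b), and
   a b / m then lies between a b / A(a,b) = H(a,b) and a b / G(a,b) = G(a,b).
   For the first chain m = G(A_v(b,a), A_{1-v}(b,a)), since H_v(a,b) = a b / A_v(b,a);
   the two weighted arithmetic means have sum a + b and product
   a b + v(1-v)(a-b)^2.  For the second chain m = A(G_v, G_{1-v}), since
   G_v G_{1-v} = a b, and m <= A(a,b) by the weighted AM-GM inequality. *)
From Stdlib Require Import Reals Lra Psatz.
Open Scope R_scope.

Definition Aw (v x y : R) : R := (1 - v) * x + v * y.

Lemma Aw_pos (v x y : R) : 0 <= v <= 1 -> 0 < x -> 0 < y -> 0 < Aw v x y.
Proof. intros Hv Hx Hy; unfold Aw; nra. Qed.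

Lemma Aw_add_compl (v x y : R) : Aw v x y + Aw (1 - v) x y = x + y.
Proof. unfold Aw; ring. Qed.

Lemma Aw_mul_compl (v x y : R) :
  Aw v x y * Aw (1 - v) x y = x * y + v * (1 - v) * ((x - y) * (x - y)).
Proof. unfold Aw; ring. Qed.

Lemma Gm_pos (x y : R) : 0 < x -> 0 < y -> 0 < Gm x y.
Proof. intros Hx Hy; apply sqrt_lt_R0, Rmult_lt_0_compat; assumption. Qed.

Lemma Gm_le_Am (x y : R) : 0 <= x -> 0 <= y -> Gm x y <= (x + y) / 2.
Proof.
  intros Hx Hy; unfold Gm.
  rewrite <- (sqrt_square ((x + y) / 2)) by lra.
  apply sqrt_le_1_alt.
  pose proof (Rle_0_sqr (x - y)); unfold Rsqr in *; nra.
Qed.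

Lemma Gm_div (c x y : R) : 0 < c -> 0 < x -> 0 < y -> Gm (c / x) (c / y) = c / Gm x y.
Proof.
  intros Hc Hx Hy; unfold Gm.
  replace (c / x * (c / y)) with ((c * c) / (x * y)) by (field; lra).
  rewrite sqrt_div by nra.
  rewrite sqrt_square by lra; reflexivity.
Qed.

Lemma Hm_eq_div_Am (x y : R) : 0 < x + y -> Hm x y = x * y / ((x + y) / 2).
Proof. intros Hxy; unfold Hm; field; lra. Qed.

Lemma Hw_eq (v a b : R) : 0 <= v <= 1 -> 0 < a -> 0 < b -> Hw v a b = a * b / Aw v b a.
Proof.
  intros Hv Ha Hb; pose proof (Aw_pos v b a Hv Hb Ha) as HA.
  unfold Hw; unfold Aw in *; field; lra.
Qed.

Lemma exp_tangent (m t : R) : exp m * (1 + (t - m)) <= exp t.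
Proof.
  replace (exp t) with (exp m * exp (t - m)) by (rewrite <- exp_plus; f_equal; ring).
  apply Rmult_le_compat_l; [left; apply exp_pos | apply exp_ineq1_le].
Qed.

(* Tangent line of exp at the weighted mean of ln a and ln b. *)
Lemma Gw_le_Aw (v a b : R) : 0 <= v <= 1 -> 0 < a -> 0 < b -> Gw v a b <= Aw v a b.
Proof.
  intros Hv Ha Hb; unfold Gw, Aw, Rpower; rewrite <- exp_plus.
  set (m := (1 - v) * ln a + v * ln b).
  pose proof (exp_tangent m (ln a)) as Ta; pose proof (exp_tangent m (ln b)) as Tb.
  rewrite exp_ln in Ta, Tb by assumption.
  replace (exp m) with (exp m * (1 + ((1 - v) * (ln a - m) + v * (ln b - m))))
    by (unfold m; ring).
  nra.
Qed.

Lemma Gw_mul_compl (v a b : R) : 0 < a -> 0 < b -> Gw v a b * Gw (1 - v) a b = a * b.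
Proof.
  intros Ha Hb; unfold Gw.
  replace (Rpower a (1 - v) * Rpower b v * (Rpower a (1 - (1 - v)) * Rpower b (1 - v)))
    with (Rpower a ((1 - v) + v) * Rpower b (v + (1 - v)))
    by (rewrite !Rpower_plus; replace (1 - (1 - v)) with v by ring; ring).
  replace ((1 - v) + v) with 1 by ring; replace (v + (1 - v)) with 1 by ring.
  rewrite !Rpower_1 by assumption; reflexivity.
Qed.

Lemma Gw_pos (v a b : R) : 0 < Gw v a b.
Proof. unfold Gw, Rpower; apply Rmult_lt_0_compat; apply exp_pos. Qed.

Lemma Hm_le_div_le_Gm (a b m : R) : 0 < a -> 0 < b ->
  Gm a b <= m <= (a + b) / 2 -> Hm a b <= a * b / m /\ a * b / m <= Gm a b.
Proof.
  intros Ha Hb [HGm HmA]; pose proof (Gm_pos a b Ha Hb) as HG.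
  assert (HGG : Gm a b * Gm a b = a * b) by (apply sqrt_sqrt; nra).
  split.
  - rewrite Hm_eq_div_Am by lra.
    apply Rmult_le_compat_l; [nra|]. apply Rinv_le_contravar; lra.
  - apply (Rmult_le_reg_r m); [lra|].
    unfold Rdiv; rewrite Rmult_assoc, Rinv_l by lra; nra.
Qed.

Theorem proposition2p9 (v a b : R) :
  0 <= v <= 1 -> 0 < a -> 0 < b ->
  (Hm a b <= Gm (Hw v a b) (Hw (1 - v) a b) /\
   Gm (Hw v a b) (Hw (1 - v) a b) <= Gm a b) /\
  (Hm a b <= Hm (Gw v a b) (Gw (1 - v) a b) /\
   Hm (Gw v a b) (Gw (1 - v) a b) <= Gm a b).
Proof.
  intros Hv Ha Hb.
  assert (Hv' : 0 <= 1 - v <= 1) by lra.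
  pose proof (Aw_pos v b a Hv Hb Ha); pose proof (Aw_pos (1 - v) b a Hv' Hb Ha).
  pose proof (Gw_pos v a b); pose proof (Gw_pos (1 - v) a b).
  split.
  - rewrite (Hw_eq v), (Hw_eq (1 - v)), Gm_div by (assumption || nra).
    apply Hm_le_div_le_Gm; try assumption; split.
    + unfold Gm; apply sqrt_le_1_alt; rewrite Aw_mul_compl.
      assert (0 <= v * (1 - v)) by nra.
      pose proof (Rle_0_sqr (b - a)); unfold Rsqr in *; nra.
    + eapply Rle_trans; [apply Gm_le_Am; lra|].
      rewrite Aw_add_compl; lra.
  - rewrite (Hm_eq_div_Am (Gw v a b)), Gw_mul_compl by (assumption || lra).
    apply Hm_le_div_le_Gm; try assumption; split.
    + unfold Gm at 1; rewrite <- (Gw_mul_compl v a b Ha Hb). apply Gm_le_Am; lra.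
    + pose proof (Gw_le_Aw v a b Hv Ha Hb); pose proof (Gw_le_Aw (1 - v) a b Hv' Ha Hb).
      pose proof (Aw_add_compl v a b); lra.
Qed.
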